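(* Let $d\ge4$ and $\alpha\in(0,\frac12)$ with $(d+1)\alpha\in\mathbb{Z}$. Let $e$ span the kernel of $Q_\alpha$ on $\mathbb{C}^{\mathcal A_d}$, let $SU^*(Q_\alpha)$ be the group of linear automorphisms of $\mathbb{C}^{\mathcal A_d}$ of determinant $1$ that preserve $Q_\alpha$ and fix $e$, and let $D$ be the subgroup of $SU^*(Q_\alpha)$ consisting of the elements that map the hyperplane $H_{1-d}=\mathrm{span}\{e_q:q\ne 1-d\}$ into itself. Then any subgroup of $SU^*(Q_\alpha)$ containing $D$ is equal to $D$ or to $SU^*(Q_\alpha)$.
   Context: $\mathcal A_d=\{1-d,3-d,\dots,d-1\}$, $(e_q)_{q\in\mathcal A_d}$ the canonical basis of $\mathbb{C}^{\mathcal A_d}$, $\zeta=e^{-2\pi i\alpha}$. $Q_\alpha$ is the hermitian form on $\mathbb{C}^{\mathcal A_d}$ (linear in the first argument, conjugate-linear in the second) with $Q_\alpha(e_p,e_p)=1$ and $Q_\alpha(e_p,e_{p'})=(1+\zeta)^{-1}=\frac12(1+i\tan\pi\alpha)$ for $p>p'$. Under the hypothesis $(d+1)\alpha\in\mathbb{Z}$, the kernel of $Q_\alpha$ is one-dimensional and is not contained in $H_{1-d}$, so in the basis $(e,e_{3-d},\dots,e_{d-1})$ elements of $SU^*(Q_\alpha)$ have block form $\begin{pmatrix}1&v\\0&g\end{pmatrix}$, and $D$ consists of those with $v=0$. *)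

From HB Require Import structures.
From mathcomp Require Import all_boot all_order all_algebra.
From mathcomp Require Import complex.
From mathcomp Require Import classical_sets reals trigo.
Set Implicit Arguments. Unset Strict Implicit. Unset Printing Implicit Defensive.
Import Order.TTheory GRing.Theory Num.Theory.
Local Open Scope ring_scope.
Local Open Scope complex_scope.

Section QForm.
Variables (R : realType) (d : nat) (alpha : R).

Definition zeta : R[i] :=
  (cos (2 * pi * alpha)) -i* (sin (2 * pi * alpha)).

(* Index i : 'I_d stands for q = 2 i + 1 - d in A_d; this is increasing in i,
   so q > q' iff i > i'.  Gram matrix of Q_alpha in the basis (e_q). *)
Definition Qmat : 'M[R[i]]_d :=
  \matrix_(i, j) (if i == j then 1
                  else if (j < i)%N then (1 + zeta)^-1
                  else ((1 + zeta)^-1)^*).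

Definition Qform (x y : 'cV[R[i]]_d) : R[i] :=
  \sum_(i < d) \sum_(j < d) x i 0 * Qmat i j * (y j 0)^*.

Definition SUstar (e : 'cV[R[i]]_d) : set 'M[R[i]]_d :=
  [set g | [/\ \det g = 1,
               (forall x y, Qform (g *m x) (g *m y) = Qform x y)
             & g *m e = e]].

(* H_{1-d} = span{e_q : q <> 1-d} = vectors with vanishing first coordinate
   (index 0 corresponds to q = 1-d). *)
Definition Hyp (x : 'cV[R[i]]_d) : Prop := forall i : 'I_d, val i = 0%N -> x i 0 = 0.

Definition Dgrp (e : 'cV[R[i]]_d) : set 'M[R[i]]_d :=
  [set g | SUstar e g /\ (forall x, Hyp x -> Hyp (g *m x))].

End QForm.

(* Let [C e] be the radical of [Q] and [H] the hyperplane.  Every element of [SU^*] is a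
   transvection [x |-> x + f(x) e] (with [f(e) = 0]) times an element of [D], and [D] acts
   on the forms [f] by right multiplication.  A subgroup [G] strictly above [D] therefore
   contains a transvection with [f = phi <> 0], and the [f] whose transvections lie in [G]
   form a [D]-stable additive group [W].  For anisotropic [u, v] in [H] with [phi(v) = 0],
   the product of the unitary pseudo-reflections along [v] and [u] with determinants
   [conj l] and [l] lies in [D] and moves [phi] by a multiple [(l - 1) c] of [Q(., u)];
   since the numbers [l - 1] with [|l| = 1] generate [C] additively, [W] contains the line
   [C Q(., u)] whenever [phi(u) <> 0].  When [d >= 4] such [v] exist and these lines span
   all of [e^perp], so [G] contains every transvection and [G = SU^*]. *)

From HB Require Import structures.
From mathcomp Require Import all_boot all_order all_algebra.
From mathcomp Require Import complex.
From mathcomp Require Import boolp classical_sets reals trigo.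
From mathcomp Require Import ring lra zify.
Set Implicit Arguments. Unset Strict Implicit. Unset Printing Implicit Defensive.
Import Order.TTheory GRing.Theory Num.Theory.
Local Open Scope ring_scope.
Local Open Scope classical_set_scope.

Section Pairing.
Variables (R : comNzRingType) (n : nat).
Implicit Types (f g : 'rV[R]_n) (x y : 'cV[R]_n).

Definition pairing f x : R := (f *m x) 0 0.

Lemma mulmx_pairing f x : f *m x = (pairing f x)%:M.
Proof. exact: mx11_scalar. Qed.

Lemma pairingDr f x y : pairing f (x + y) = pairing f x + pairing f y.
Proof. by rewrite /pairing mulmxDr mxE. Qed.

Lemma pairingZr f a x : pairing f (a *: x) = a * pairing f x.
Proof. by rewrite /pairing -scalemxAr mxE. Qed.

Lemma pairingNr f x : pairing f (- x) = - pairing f x.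
Proof. by rewrite /pairing mulmxN mxE. Qed.

Lemma pairingDl f g x : pairing (f + g) x = pairing f x + pairing g x.
Proof. by rewrite /pairing mulmxDl mxE. Qed.

Lemma pairingZl a f x : pairing (a *: f) x = a * pairing f x.
Proof. by rewrite /pairing -scalemxAl mxE. Qed.

Lemma pairingNl f x : pairing (- f) x = - pairing f x.
Proof. by rewrite /pairing mulNmx mxE. Qed.

Lemma pairingMl f (A : 'M[R]_n) x : pairing (f *m A) x = pairing f (A *m x).
Proof. by rewrite /pairing mulmxA. Qed.

Lemma pairing_delta f j : pairing f (delta_mx j 0) = f 0 j.
Proof. by rewrite /pairing -colE mxE. Qed.

Lemma pairing_row_delta (j : 'I_n) x : pairing (delta_mx 0 j) x = x j 0.
Proof. by rewrite /pairing -rowE mxE. Qed.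

Lemma row_pairing_eq0 f : (forall x, pairing f x = 0) -> f = 0.
Proof. by move=> f0; apply/rowP => j; rewrite -pairing_delta f0 mxE. Qed.

Lemma exists_pairing_neq0 f : f != 0 -> exists x, pairing f x != 0.
Proof.
move=> fN0; apply: contra_notP (negP fN0) => noX; apply/eqP/row_pairing_eq0 => x.
by apply/eqP/negPn/negP => fx; apply: noX; exists x.
Qed.

End Pairing.

Lemma det_add1_rank1 (R : comNzRingType) n (u : 'cV[R]_n) (f : 'rV[R]_n) :
  \det (1%:M + u *m f) = 1 + pairing f u.
Proof.
pose B := block_mx (1%:M : 'M_n) u (- f) (1%:M : 'M_1).
have lower_upper : B = block_mx 1%:M 0 (- f) 1%:M *m block_mx 1%:M u 0 (1%:M + f *m u).
  rewrite mulmx_block /B !mulmx1 !mul1mx ?mul0mx ?mulmx0 ?addr0 ?add0r mulNmx.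
  by rewrite addrC addrK.
have upper_lower : B = block_mx (1%:M + u *m f) u 0 1%:M *m block_mx 1%:M 0 (- f) 1%:M.
  rewrite mulmx_block /B !mulmx1 !mul1mx ?mul0mx ?mulmx0 ?addr0 ?add0r mulmxN.
  by rewrite addrK.
have := congr1 determinant lower_upper; rewrite {1}upper_lower !det_mulmx.
rewrite !det_lblock !det_ublock !det1 !mul1r !mulr1 det_mx11 => ->.
by rewrite mxE [in LHS]mxE eqxx mulr1n.
Qed.

Lemma exists_nonzero_common_zero3 (F : fieldType) n (f g h : 'rV[F]_n) : (3 < n)%N ->
  exists2 x : 'cV[F]_n, x != 0 &
    [/\ pairing f x = 0, pairing g x = 0 & pairing h x = 0].
Proof.
move=> n_gt3; pose A : 'M[F]_(1 + (1 + 1), n) := col_mx f (col_mx g h).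
have : kermx A^T != 0.
  apply/eqP => A0; have := mxrank_ker A^T; rewrite A0 mxrank0 mxrank_tr.
  by have := rank_leq_row A; lia.
case/rowV0Pn => v /sub_kermxP vA v0; exists v^T; first by rewrite trmx_eq0.
have : A *m v^T = 0 by rewrite -[A]trmxK -trmx_mul vA trmx0.
rewrite !mul_col_mx => /eqP; rewrite !col_mx_eq0 => /and3P[/eqP fv /eqP gv /eqP hv].
by rewrite /pairing fv gv hv !mxE.
Qed.

Lemma exists_nat_nonroot (F : numDomainType) (p : {poly F}) :
  p != 0 -> exists n : nat, ~~ root p n%:R.
Proof.
move=> p0; pose rs := [seq n%:R : F | n <- iota 0 (size p)].
have rs_uniq : uniq rs by rewrite map_inj_uniq ?iota_uniq // => m k /eqP; rewrite eqr_nat => /eqP.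
have [all_roots|/allPn[_ /mapP[n _ ->] pn]] := boolP (all (root p) rs); last by exists n.
by have := max_poly_roots p0 all_roots rs_uniq; rewrite size_map size_iota ltnn.
Qed.

Section UnitCircle.
Variable R : realType.
Local Notation C := R[i].

Lemma complex_unit (x y : R) : x ^+ 2 + y ^+ 2 = 1 -> (x +i* y)%C * (x +i* y)%C^* = 1.
Proof.
move=> xy1; change ((x +i* y) * (x -i* y) = (1 +i* 0))%C.
by simpc; rewrite -xy1; congr (_ +i* _)%C; ring.
Qed.

Lemma real_mul_unit_diff (a : R) (w : C) : -2 <= a <= 2 -> w * w^* = 1 ->
  exists l1 l2 : C, [/\ l1 * l1^* = 1, l2 * l2^* = 1 & a%:C%C * w = l1 - l2].
Proof.
move=> /andP[a_ge a_le] w_unit; pose s := Num.sqrt (1 - a ^+ 2 / 4).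
have s2 : s ^+ 2 = 1 - a ^+ 2 / 4 by rewrite sqr_sqrtr //; nra.
have unit b : b ^+ 2 = a ^+ 2 -> ((b / 2) +i* s)%C * w * (((b / 2) +i* s)%C * w)^* = 1.
  move=> b2; rewrite rmorphM mulrACA w_unit mulr1 complex_unit //.
  by rewrite s2 expr_div_n b2; field.
exists (((a / 2) +i* s)%C * w), (((- a / 2) +i* s)%C * w).
split; [exact: unit | exact: unit (sqrrN a) |].
by rewrite -mulrBl; congr (_ * w); simpc; congr (_ +i* _)%C; field.
Qed.

Lemma unit_circle_shifts_generate (S : C -> Prop) :
    (forall a b, S a -> S b -> S (a - b)) ->
    (forall l, l * l^* = 1 -> S (l - 1)) ->
  forall z, S z.
Proof.
move=> SB S_shift.
have S_diff l1 l2 : l1 * l1^* = 1 -> l2 * l2^* = 1 -> S (l1 - l2).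
  move=> l1u l2u; have -> : l1 - l2 = (l1 - 1) - (l2 - 1) by rewrite opprB addrA subrK.
  by apply: (SB); apply: (S_shift).
have S0 : S 0 by rewrite -(subrr 1); apply: S_diff; rewrite conjC1 mulr1.
have SD a b : S a -> S b -> S (a + b).
  by move=> Sa Sb; rewrite -[b]opprK -(sub0r b); apply: (SB) => //; apply: (SB).
have SMn a n : S a -> S (a *+ n).
  by move=> Sa; elim: n => [|n IH]; rewrite ?mulr0n // mulrS; apply: SD.
have S_real_mul a w : -2 <= a <= 2 -> w * w^* = 1 -> S (a%:C * w)%C.
  move=> a_bd w_unit; have [l1 [l2 [l1u l2u ->]]] := real_mul_unit_diff a_bd w_unit.
  exact: S_diff.
move=> [x y].
have [N ltN] : exists N : nat, `|x| + `|y| < N%:R.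
  by exists (Num.Def.archi_bound (`|x| + `|y|)); apply: archi_boundP; rewrite addr_ge0.
have N0 : 0 < N%:R :> R by apply: le_lt_trans ltN; rewrite addr_ge0.
have bound a : `|a| <= `|x| + `|y| -> -2 <= a / N%:R <= 2.
  rewrite ler_norml ler_pdivrMr // ler_pdivlMr // => /andP[? ?].
  by apply/andP; split; lra.
have unit1 : 1 * 1^* = 1 :> C by rewrite conjC1 mulr1.
have uniti : 'i%C * 'i%C^* = 1 :> C by rewrite conjCi mulrN -expr2 sqrCi opprK.
have x_le : `|x| <= `|x| + `|y| by rewrite lerDl.
have y_le : `|y| <= `|x| + `|y| by rewrite lerDr.
have := SMn _ N (SD _ _ (S_real_mul _ _ (bound x x_le) unit1)
                         (S_real_mul _ _ (bound y y_le) uniti)).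
have N_neq0 : N%:R != 0 :> R by rewrite lt0r_neq0.
congr S; rewrite [RHS]complexE.
rewrite [complex.Re _]/= [complex.Im _]/= mulr1 mulrnDl -mulrnAl -!(raddfMn (@real_complex R)).
by rewrite -[x / _ *+ _]mulr_natr -[y / _ *+ _]mulr_natr !divfK // [_ * 'i%C]mulrC.
Qed.

End UnitCircle.

Section HermitianForm.
Variables (R : realType) (d : nat) (M : 'M[R[i]]_d).
Local Notation C := R[i].
Implicit Types (x y z : 'cV[C]_d) (f : 'rV[C]_d).

Definition hform x y : C := \sum_(i < d) \sum_(j < d) x i 0 * M i j * (y j 0)^*.

Definition hrow y : 'rV[C]_d := (M *m map_mx Num.conj y)^T.

Local Notation Q := hform.

Lemma hformE x y : Q x y = pairing (hrow y) x.
Proof.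
rewrite /Q /pairing /hrow mxE; apply: eq_bigr => i _; rewrite !mxE mulr_suml.
by apply: eq_bigr => j _; rewrite !mxE; ring.
Qed.

Lemma hform_mxE x y : Q x y = pairing (x^T *m M) (map_mx Num.conj y).
Proof.
rewrite /Q /pairing mxE exchange_big; apply: eq_bigr => j _; rewrite !mxE mulr_suml.
by apply: eq_bigr => i _; rewrite !mxE.
Qed.

Lemma hrowD y z : hrow (y + z) = hrow y + hrow z.
Proof. by rewrite /hrow map_mxD mulmxDr linearD. Qed.

Lemma hrowZ a y : hrow (a *: y) = a^* *: hrow y.
Proof. by rewrite /hrow map_mxZ -scalemxAr linearZ. Qed.

Lemma hrowN y : hrow (- y) = - hrow y.
Proof. by rewrite -scaleN1r hrowZ rmorphN1 scaleN1r. Qed.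

Lemma hformDl x y z : Q (x + y) z = Q x z + Q y z.
Proof. by rewrite !hformE pairingDr. Qed.

Lemma hformZl a x y : Q (a *: x) y = a * Q x y.
Proof. by rewrite !hformE pairingZr. Qed.

Lemma hformDr x y z : Q x (y + z) = Q x y + Q x z.
Proof. by rewrite !hformE hrowD pairingDl. Qed.

Lemma hformZr a x y : Q x (a *: y) = a^* * Q x y.
Proof. by rewrite !hformE hrowZ pairingZl. Qed.

Lemma hform_eq0_mulmx x : (forall y, Q x y = 0) -> x^T *m M = 0.
Proof.
move=> x_rad; apply/rowP => j; rewrite [RHS]mxE -(x_rad (delta_mx j 0)) hform_mxE.
have -> : map_mx Num.conj (delta_mx j 0) = delta_mx j 0 :> 'cV[C]_d.
  by apply/matrixP => a b; rewrite !mxE conjC_nat.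
by rewrite pairing_delta.
Qed.

Lemma hform_polarize x y : Q x x = 0 -> Q y y = 0 -> Q (x + y) (x + y) = 0 ->
  Q (x + 'i *: y) (x + 'i *: y) = 0 -> Q x y = 0.
Proof.
move=> xx yy xy xiy; move: xy xiy.
rewrite !hformDl !hformDr !hformZl !hformZr conjCi xx yy !addr0 !add0r => xy xiy.
have : 'i * (Q y x - Q x y) = 0 by rewrite -xiy; ring.
move/eqP; rewrite mulf_eq0 (negbTE (neq0Ci _)) subr_eq0 => /eqP yx.
move/eqP: xy; rewrite yx -mulr2n -mulr_natr mulf_eq0 pnatr_eq0 orbF.
by move/eqP.
Qed.

Lemma exists_shift_anisotropic (phi : 'rV[C]_d) x z :
    Q z z != 0 -> (pairing phi x != 0) || (pairing phi z != 0) ->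
  exists n : nat, (Q (x + n%:R *: z) (x + n%:R *: z) != 0) &&
                  (pairing phi (x + n%:R *: z) != 0).
Proof.
move=> zz phi_xz.
pose q : {poly C} := (Q x x)%:P + (Q x z + Q z x) *: 'X + Q z z *: 'X^2.
pose l : {poly C} := (pairing phi x)%:P + pairing phi z *: 'X.
have q0 : q != 0.
  apply: contraNneq zz => /(congr1 (fun p : {poly C} => p`_2)).
  by rewrite !coefD coefC !coefZ coefX coefXn coef0 /= mulr0 mulr1 !add0r => ->.
have l0 : l != 0.
  apply: contraTneq phi_xz => l0; apply/norP; split; apply/negPn/eqP.
    move: l0 => /(congr1 (fun p : {poly C} => p`_0)).
    by rewrite coefD coefC coefZ coefX coef0 /= mulr0 addr0.
  move: l0 => /(congr1 (fun p : {poly C} => p`_1)).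
  by rewrite coefD coefC coefZ coefX coef0 /= mulr1 add0r.
have [n] := exists_nat_nonroot (mulf_neq0 q0 l0).
rewrite rootM negb_or /root; exists n.
have -> : Q (x + n%:R *: z) (x + n%:R *: z) = q.[n%:R].
  rewrite /q !(hornerD, hornerZ, hornerC, hornerX, hornerXn).
  by rewrite hformDl !hformDr !hformZl !hformZr conjC_nat; ring.
have -> : pairing phi (x + n%:R *: z) = l.[n%:R].
  by rewrite /l !(hornerD, hornerZ, hornerC, hornerX) pairingDr pairingZr mulrC.
by [].
Qed.

Hypothesis M_herm : forall i j, M j i = (M i j)^*.

Lemma hform_conj x y : Q y x = (Q x y)^*.
Proof.
rewrite /Q rmorph_sum exchange_big; apply: eq_bigr => i _.
rewrite rmorph_sum; apply: eq_bigr => j _.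
by rewrite !rmorphM /= conjCK -M_herm; ring.
Qed.

Lemma hform_self_conj x : (Q x x)^* = Q x x.
Proof. by rewrite -hform_conj. Qed.

End HermitianForm.

Section RadicalLine.
Variables (R : realType) (d : nat) (M : 'M[R[i]]_d).
Local Notation C := R[i].
Local Notation Q := (hform M).
Local Notation hrow := (hrow M).
Implicit Types (x y z u v : 'cV[C]_d) (f : 'rV[C]_d) (g k s : 'M[C]_d).

Hypothesis M_herm : forall i j, M j i = (M i j)^*.
Variable e : 'cV[C]_d.
Hypothesis radical_e : forall x, (forall y, Q x y = 0) <-> exists c, x = c *: e.
Variable h : 'rV[C]_d.
Hypothesis h_e : pairing h e != 0.

Definition in_hyp x := pairing h x = 0.

Definition SUgroup : set 'M[C]_d :=
  [set g | [/\ \det g = 1, forall x y, Q (g *m x) (g *m y) = Q x y & g *m e = e]].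

Definition Dgroup : set 'M[C]_d :=
  [set g | SUgroup g /\ forall x, in_hyp x -> in_hyp (g *m x)].

Definition transvection f : 'M[C]_d := 1%:M + e *m f.

Definition hproj : 'M[C]_d := 1%:M - (pairing h e)^-1 *: (e *m h).

Lemma hform_radl y : Q e y = 0.
Proof. by move: y; apply/radical_e; exists 1; rewrite scale1r. Qed.

Lemma hform_radr y : Q y e = 0.
Proof. by rewrite hform_conj // hform_radl conjC0. Qed.

Lemma hrow_rad : hrow e = 0.
Proof. by apply: row_pairing_eq0 => x; rewrite -hformE hform_radr. Qed.

Lemma hform_shift x y a b : Q (x + a *: e) (y + b *: e) = Q x y.
Proof.
by rewrite hformDl !hformDr !hformZl !hformZr !hform_radl !hform_radr !mulr0 !addr0.
Qed.

Lemma hprojE x : hproj *m x = x - (pairing h x / pairing h e) *: e.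
Proof.
rewrite mulmxBl mul1mx -scalemxAl -mulmxA mulmx_pairing mul_mx_scalar scalerA.
by rewrite mulrC.
Qed.

Lemma hproj_rad : hproj *m e = 0.
Proof. by rewrite hprojE divff // scale1r subrr. Qed.

Lemma hproj_id x : in_hyp x -> hproj *m x = x.
Proof. by rewrite hprojE => ->; rewrite mul0r scale0r subr0. Qed.

Lemma in_hyp_hproj x : in_hyp (hproj *m x).
Proof. by rewrite /in_hyp hprojE pairingDr pairingNr pairingZr divfK // subrr. Qed.

Lemma pairing_hproj f x : f *m e = 0 -> pairing f (hproj *m x) = pairing f x.
Proof.
move=> fe; rewrite -pairingMl mulmxBr mulmx1 -scalemxAr mulmxA fe mul0mx.
by rewrite scaler0 subr0.
Qed.

Lemma hrow_hproj x : hrow (hproj *m x) = hrow x.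
Proof. by rewrite hprojE hrowD hrowN hrowZ hrow_rad scaler0 subr0. Qed.

Lemma transvectionE f x : transvection f *m x = x + pairing f x *: e.
Proof. by rewrite mulmxDl mul1mx -mulmxA mulmx_pairing mul_mx_scalar. Qed.

Lemma transvection0 : transvection 0 = 1%:M.
Proof. by rewrite /transvection mulmx0 addr0. Qed.

Lemma transvectionD f (f' : 'rV[C]_d) : f *m e = 0 ->
  transvection f *m transvection f' = transvection (f + f').
Proof.
move=> fe; rewrite /transvection mulmxDl mul1mx !mulmxDr mulmx1 mulmxA.
by rewrite -(mulmxA e f e) fe mulmx0 mul0mx addr0 addrAC addrA.
Qed.

Lemma transvection_conj k f : k \in unitmx -> k *m e = e ->
  invmx k *m transvection f *m k = transvection (f *m k).
Proof.
move=> k_unit ke; have k'e : invmx k *m e = e by rewrite -{1}ke mulKmx.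
by rewrite mulmxDr mulmx1 mulmxDl mulVmx // !mulmxA k'e -mulmxA.
Qed.

Lemma SU_unit g : SUgroup g -> g \in unitmx.
Proof. by case=> g1 _ _; rewrite unitmxE g1 unitr1. Qed.

Lemma SU_mul g k : SUgroup g -> SUgroup k -> SUgroup (g *m k).
Proof.
case=> g1 gQ ge [k1 kQ ke]; split.
- by rewrite det_mulmx g1 k1 mulr1.
- by move=> x y; rewrite -!mulmxA gQ kQ.
- by rewrite -mulmxA ke ge.
Qed.

Lemma transvection_SU f : f *m e = 0 -> SUgroup (transvection f).
Proof.
move=> fe; split.
- by rewrite det_add1_rank1 /pairing fe mxE addr0.
- by move=> x y; rewrite !transvectionE hform_shift.
- by rewrite transvectionE /pairing fe mxE scale0r addr0.
Qed.

Lemma transvectionN f : f *m e = 0 -> invmx (transvection f) = transvection (- f).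
Proof.
move=> fe; have /SU_unit Tf_unit := transvection_SU fe.
by rewrite -[invmx _]mulmx1 -transvection0 -(subrr f) -transvectionD // mulmxA mulVmx // mul1mx.
Qed.

Lemma transvection_decompK f s : f *m e = 0 ->
  transvection f *m (transvection (- f) *m s) = s.
Proof. by move=> fe; rewrite mulmxA transvectionD // subrr transvection0 mul1mx. Qed.

Lemma SU_transvection_decomp s : SUgroup s ->
  exists f, f *m e = 0 /\ Dgroup (transvection (- f) *m s).
Proof.
move=> s_SU; have s_unit := SU_unit s_SU; have [_ _ se] := s_SU.
have s'e : invmx s *m e = e by rewrite -{1}se mulKmx.
pose f := (pairing h e)^-1 *: (h *m s *m hproj *m invmx s).
have fe : f *m e = 0 by rewrite -scalemxAl -!mulmxA s'e hproj_rad !mulmx0 scaler0.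
exists f; split => //; split.
  by apply: SU_mul => //; apply: transvection_SU; rewrite mulNmx fe oppr0.
move=> x x_hyp; rewrite /in_hyp -mulmxA transvectionE pairingDr pairingZr pairingNl.
rewrite pairingZl !pairingMl mulKmx // hproj_id //.
by rewrite mulNr mulrAC mulVf // mul1r subrr.
Qed.

Lemma rad_neq0 : e != 0.
Proof. by apply: contraNneq h_e => ->; rewrite /pairing mulmx0 mxE. Qed.

Lemma kermx_sub_rad : (kermx M <= e^T)%MS.
Proof.
apply/row_subP => i; set y := row i (kermx M).
have yM : y *m M = 0 by apply/sub_kermxP; exact: row_sub.
have y_rad w : Q y^T w = 0 by rewrite hform_mxE trmxK yM /pairing mul0mx mxE.
have [c yc] := (radical_e y^T).1 y_rad.
by rewrite -[y]trmxK yc linearZ scalemx_sub.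
Qed.

(* [M] has corank one, so the rows of [M^T] span the whole annihilator of [e]. *)
Lemma hrow_onto f : f *m e = 0 -> exists2 x, in_hyp x & hrow x = f.
Proof.
move=> fe.
have Mt_ker : (M^T <= kermx e)%MS.
  apply/sub_kermxP.
  by rewrite -[M^T *m e]trmxK trmx_mul trmxK (hform_eq0_mulmx hform_radl) trmx0.
have rank_M : (d - 1 <= \rank M)%N.
  by have := mxrankS kermx_sub_rad; rewrite mxrank_ker rank_rV trmx_eq0 rad_neq0; lia.
have ker_Mt : (kermx e <= M^T)%MS.
  rewrite -(mxrank_leqif_sup Mt_ker).2 eqn_leq (mxrankS Mt_ker) /= mxrank_ker.
  by rewrite -[\rank e]mxrank_tr rank_rV trmx_eq0 rad_neq0 mxrank_tr.
have [y fy] : exists y : 'rV[C]_d, f = y *m M^T.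
  by apply/submxP; apply: submx_trans ker_Mt; apply/sub_kermxP.
exists (hproj *m (map_mx Num.conj y)^T); first exact: in_hyp_hproj.
rewrite hrow_hproj /hrow trmx_mul fy; congr (_ *m _).
by apply/matrixP => i j; rewrite !mxE conjCK.
Qed.

Lemma exists_hyp_pairing_neq0 f : f != 0 -> f *m e = 0 ->
  exists2 z, in_hyp z & pairing f z != 0.
Proof.
move=> f_neq0 fe; have [x fx] := exists_pairing_neq0 f_neq0.
by exists (hproj *m x); [exact: in_hyp_hproj | rewrite pairing_hproj].
Qed.

Hypothesis d_gt3 : (3 < d)%N.

(* If [H ∩ ker f] were totally isotropic it would be orthogonal to itself by polarization;
   since [3 < d] it contains a nonzero [x] also orthogonal to a complement [z0] of it in [H],
   and then [x] lies in the radical [C e], which meets [H] trivially. *)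
Lemma exists_anisotropic f : f != 0 -> f *m e = 0 ->
  exists v, [/\ in_hyp v, pairing f v = 0 & Q v v != 0].
Proof.
move=> f_neq0 fe.
have [//|no_aniso] := pselect (exists v, [/\ in_hyp v, pairing f v = 0 & Q v v != 0]).
have isotropic w : in_hyp w -> pairing f w = 0 -> Q w w = 0.
  move=> w_hyp fw; apply/eqP/negPn/negP => ww; apply: no_aniso; exists w.
  by split.
have orthogonal w w' : in_hyp w -> pairing f w = 0 -> in_hyp w' -> pairing f w' = 0 ->
    Q w w' = 0.
  rewrite /in_hyp => hw fw hw' fw'; apply: hform_polarize; apply: isotropic;
    by rewrite /in_hyp ?pairingDr ?pairingZr ?hw ?fw ?hw' ?fw' ?mulr0 ?addr0.
have [z0 z0_hyp fz0] := exists_hyp_pairing_neq0 f_neq0 fe.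
have [x x_neq0 [hx fx z0x]] := exists_nonzero_common_zero3 h f (hrow z0) d_gt3.
have x_rad y : Q x y = 0.
  rewrite hformE -hrow_hproj -hformE.
  set w := hproj *m y; have w_hyp : in_hyp w := in_hyp_hproj y.
  pose t := pairing f w / pairing f z0.
  have -> : w = (w - t *: z0) + t *: z0 by rewrite subrK.
  rewrite hformDr hformZr (hformE M x z0) z0x mulr0 addr0; apply: orthogonal => //.
  - by rewrite /in_hyp pairingDr pairingNr pairingZr w_hyp z0_hyp mulr0 subrr.
  - by rewrite pairingDr pairingNr pairingZr divfK // subrr.
have [c xc] := (radical_e x).1 x_rad.
move: hx; rewrite xc pairingZr => /eqP; rewrite mulf_eq0 (negbTE h_e) orbF => /eqP c0.
by move: x_neq0; rewrite xc c0 scale0r eqxx.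
Qed.

Definition preflection u (l : C) : 'M[C]_d :=
  1%:M + ((l - 1) / Q u u) *: (u *m hrow u).

Lemma preflectionE u l x : preflection u l *m x = x + ((l - 1) / Q u u * Q x u) *: u.
Proof.
rewrite mulmxDl mul1mx -scalemxAl -mulmxA mulmx_pairing mul_mx_scalar scalerA.
by rewrite -hformE.
Qed.

Lemma mulmx_preflection f u l :
  f *m preflection u l = f + ((l - 1) / Q u u * pairing f u) *: hrow u.
Proof.
by rewrite mulmxDr mulmx1 -scalemxAr mulmxA mulmx_pairing mul_scalar_mx scalerA.
Qed.

Lemma preflection_rad u l : preflection u l *m e = e.
Proof. by rewrite preflectionE hform_radl mulr0 scale0r addr0. Qed.

Lemma preflection_hyp u l x : in_hyp u -> in_hyp x -> in_hyp (preflection u l *m x).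
Proof. by rewrite /in_hyp preflectionE pairingDr pairingZr => -> ->; rewrite mulr0 addr0. Qed.

Section UnitaryPreflection.
Variables (u : 'cV[C]_d) (l : C).
Hypotheses (l_unit : l * l^* = 1) (u_aniso : Q u u != 0).

Lemma preflection_isometry x y : Q (preflection u l *m x) (preflection u l *m y) = Q x y.
Proof.
have l_neq0 : l != 0 by apply: contra_eq_neq l_unit => ->; rewrite mul0r eq_sym oner_neq0.
have l_conj : l^* = l^-1 by apply: (mulfI l_neq0); rewrite l_unit divff.
rewrite !preflectionE hformDl !hformDr !hformZl !hformZr (hform_conj M_herm y u).
rewrite !rmorphM /= fmorphV /= hform_self_conj // rmorphB /= rmorph1 l_conj.
by field; rewrite u_aniso l_neq0.
Qed.

Lemma det_preflection : \det (preflection u l) = l.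
Proof.
rewrite /preflection scalemxAr det_add1_rank1 pairingZl -hformE.
by field.
Qed.

End UnitaryPreflection.

Lemma preflection_pair_D u v l : in_hyp u -> in_hyp v -> Q u u != 0 -> Q v v != 0 ->
  l * l^* = 1 -> Dgroup (preflection v l^* *m preflection u l).
Proof.
move=> u_hyp v_hyp u_aniso v_aniso l_unit.
have l'_unit : l^* * l^*^* = 1 by rewrite conjCK mulrC.
split; first split.
- by rewrite det_mulmx !det_preflection // mulrC.
- by move=> x y; rewrite -!mulmxA !preflection_isometry.
- by rewrite -mulmxA !preflection_rad.
- by move=> x x_hyp; rewrite -mulmxA; do 2![apply: preflection_hyp => //].
Qed.

Section DStableAnnihilatorGroup.
Variable W : 'rV[C]_d -> Prop.
Hypotheses (W_ann : forall f, W f -> f *m e = 0)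
           (WB : forall f f', W f -> W f' -> W (f - f'))
           (W_D : forall k f, Dgroup k -> W f -> W (f *m k)).
Variable phi : 'rV[C]_d.
Hypotheses (W_phi : W phi) (phi_neq0 : phi != 0).

(* Moving [phi] by the element [preflection v l^* * preflection u l] of [D] adds
   [(l - 1) * g] times [hrow u], and the numbers [l - 1] with [|l| = 1] generate [C]. *)
Lemma W_hrow_line u : in_hyp u -> Q u u != 0 -> pairing phi u != 0 ->
  forall c, W (c *: hrow u).
Proof.
move=> u_hyp u_aniso phi_u.
have [v [v_hyp phi_v v_aniso]] := exists_anisotropic phi_neq0 (W_ann W_phi).
pose g := pairing phi u / Q u u.
have g_neq0 : g != 0 by rewrite mulf_neq0 ?invr_eq0.
suff W_line c : W ((c * g) *: hrow u) by move=> c; rewrite -(divfK g_neq0 c).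
move: c; apply: (@unit_circle_shifts_generate R (fun c => W ((c * g) *: hrow u))).
  by move=> a b Wa Wb; rewrite mulrBl scalerBl; apply: WB.
move=> l l_unit.
have := WB (W_D (preflection_pair_D u_hyp v_hyp u_aniso v_aniso l_unit) W_phi) W_phi.
rewrite mulmxA [phi *m preflection v _]mulmx_preflection phi_v mulr0 scale0r addr0.
by rewrite mulmx_preflection addrAC subrr add0r /g mulrA mulrAC.
Qed.

Lemma W_annihilator f : f *m e = 0 -> W f.
Proof.
move=> fe; have phi_e := W_ann W_phi.
have [v [v_hyp phi_v v_aniso]] := exists_anisotropic phi_neq0 phi_e.
have [z0 z0_hyp phi_z0] := exists_hyp_pairing_neq0 phi_neq0 phi_e.
have phi_z0v : (pairing phi z0 != 0) || (pairing phi v != 0) by rewrite phi_z0.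
have [n /andP[z_aniso phi_z]] := exists_shift_anisotropic v_aniso phi_z0v.
set z := z0 + n%:R *: v in z_aniso phi_z.
have z_hyp : in_hyp z by rewrite /in_hyp pairingDr pairingZr z0_hyp v_hyp mulr0 addr0.
have [x x_hyp <-] := hrow_onto fe.
have phi_xz : (pairing phi x != 0) || (pairing phi z != 0) by rewrite phi_z orbT.
have [m /andP[y_aniso phi_y]] := exists_shift_anisotropic z_aniso phi_xz.
have y_hyp : in_hyp (x + m%:R *: z).
  by rewrite /in_hyp pairingDr pairingZr x_hyp z_hyp mulr0 addr0.
have -> : hrow x = 1 *: hrow (x + m%:R *: z) - m%:R *: hrow z.
  by rewrite scale1r hrowD hrowZ conjC_nat addrK.
by apply: WB; apply: W_hrow_line.
Qed.

End DStableAnnihilatorGroup.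

Section OvergroupOfD.
Variable G : set 'M[C]_d.
Hypotheses (GM : forall g k, G g -> G k -> G (g *m k))
           (GV : forall g, G g -> G (invmx g))
           (D_G : Dgroup `<=` G).

Lemma overgroup_transvections f : f != 0 -> f *m e = 0 -> G (transvection f) ->
  forall f', f' *m e = 0 -> G (transvection f').
Proof.
move=> f_neq0 fe Tf_G f' f'e.
suff [] : f' *m e = 0 /\ G (transvection f') by [].
apply: (@W_annihilator (fun f => f *m e = 0 /\ G (transvection f)) _ _ _ f) => //.
- by move=> ? [].
- move=> a b [ae Ga] [be Gb]; split; first by rewrite mulmxBl ae be subr0.
  by rewrite -transvectionD // -transvectionN //; apply: GM => //; apply: GV.
- move=> k a k_D [ae Ga]; have [[k1 _ ke] _] := k_D.
  have k_unit : k \in unitmx by rewrite unitmxE k1 unitr1.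
  split; first by rewrite -mulmxA ke.
  rewrite -transvection_conj //; apply: GM; last exact: D_G.
  by apply: GM => //; apply: GV; apply: D_G.
Qed.

Theorem D_maximal_in_SU : G `<=` SUgroup -> G = Dgroup \/ G = SUgroup.
Proof.
move=> G_SU; have [G_D|/existsNP[g /not_implyP[Gg g_notD]]] := pselect (G `<=` Dgroup).
  by left; apply/seteqP; split.
right; have [f [fe k_D]] := SU_transvection_decomp (G_SU g Gg).
set k := transvection (- f) *m g in k_D.
have Tf_G : G (transvection f).
  have k_unit : k \in unitmx by case: k_D => /SU_unit.
  rewrite -(mulmxK k_unit (transvection f)) transvection_decompK //.
  by apply: GM => //; apply: GV; apply: D_G.
have f_neq0 : f != 0.
  apply: contra_not_neq g_notD => f0.
  by move: k_D; rewrite /k f0 oppr0 transvection0 mul1mx.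
apply/seteqP; split => // s s_SU.
have [f' [f'e s'_D]] := SU_transvection_decomp s_SU.
rewrite -(transvection_decompK s f'e); apply: GM; last exact: D_G.
exact: overgroup_transvections f_neq0 fe Tf_G f' f'e.
Qed.

End OvergroupOfD.

End RadicalLine.

Section QalphaForm.
Variables (R : realType) (d : nat) (alpha : R).
Local Notation M := (Qmat d alpha).
Local Notation c := ((1 + zeta alpha)^-1).

Lemma Qmat_herm i j : M j i = (M i j)^*.
Proof.
rewrite !mxE; have [_|ij] := eqVneq i j; first by rewrite /= conjC1.
case: (ltngtP i j) => [_|_|/val_inj ij']; first exact: esym (conjCK _).
- by [].
- by rewrite ij' eqxx in ij.
Qed.

Lemma Qmat_col_succ (i j j' : 'I_d) : j' = j.+1 :> nat ->
  M i j' - M i j = (i == j)%:R * (c^* - 1) + (i == j')%:R * (1 - c).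
Proof.
rewrite !mxE -[i == j]/(i == j :> nat) -[i == j']/(i == j' :> nat) => ->.
move: (i : nat) (j : nat) c => a b c0.
case: (ltngtP a b) => [ab|ba|<-].
- by case: (ltngtP a b.+1) => ab1; try lia; rewrite /= ?(mul0r, addr0, subrr).
- by case: (ltngtP a b.+1) => ab1; try lia; rewrite /= ?(mul0r, mul1r, addr0, add0r, subrr).
- by rewrite (ltn_eqF (ltnSn a)) ltnNge leqnSn /= ?(mul0r, mul1r, addr0, add0r).
Qed.

Lemma zeta_neq0 : zeta alpha != 0.
Proof.
have zeta_unit : zeta alpha * (zeta alpha)^* = 1.
  by apply: complex_unit; rewrite sqrrN cos2Dsin2.
by apply: contra_eq_neq zeta_unit => ->; rewrite mul0r eq_sym oner_neq0.
Qed.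

(* Subtracting consecutive columns of [Qmat] shows that a left-kernel vector [x] satisfies
   [x_j (c^* - 1) + x_(j+1) (1 - c) = 0], so [x] vanishes as soon as its first entry does. *)
Lemma Qmat_ker_hyp_eq0 (x : 'cV[R[i]]_d) : x^T *m M = 0 -> Hyp x -> x = 0.
Proof.
move=> xM x_hyp; apply/matrixP => i k; rewrite (ord1 k) mxE.
have c_neq1 : c != 1 by rewrite invr_eq1 addrC -subr_eq0 addrK zeta_neq0.
have col0 l : \sum_i x i 0 * M i l = 0.
  transitivity ((x^T *m M) 0 l); last by rewrite xM mxE.
  by rewrite [RHS]mxE; apply: eq_bigr => i' _; rewrite [x^T _ _]mxE.
suff x0 n (n_lt : (n < d)%N) : x (Ordinal n_lt) 0 = 0 by case: i => n n_lt; exact: x0.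
elim: n n_lt => [|n IH] n_lt; first exact: x_hyp.
have n_lt' : (n < d)%N by lia.
set j := Ordinal n_lt'; set j' := Ordinal n_lt.
have pick l (a : R[i]) : \sum_i x i 0 * ((i == l)%:R * a) = x l 0 * a.
  rewrite (bigD1 l) //= eqxx mul1r big1 ?addr0 // => i' /negbTE ->.
  by rewrite mul0r mulr0.
have : \sum_i x i 0 * (M i j' - M i j) = 0.
  by under eq_bigr do rewrite mulrBr; rewrite sumrB !col0 subrr.
under eq_bigr do rewrite (Qmat_col_succ _ (j := j) (j' := j')) // mulrDr.
rewrite big_split /= !pick (IH n_lt') mul0r add0r => /eqP.
by rewrite mulf_eq0 subr_eq0 [1 == _]eq_sym (negbTE c_neq1) orbF => /eqP.
Qed.

Lemma HypE (i0 : 'I_d) (x : 'cV[R[i]]_d) : val i0 = 0%N ->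
  Hyp x <-> in_hyp (delta_mx 0 i0) x.
Proof.
rewrite /in_hyp pairing_row_delta => i00; split=> [|x0 i i_0]; first exact.
by rewrite (_ : i = i0) //; apply: val_inj; rewrite /= i_0 i00.
Qed.

Lemma Dgrp_Dgroup (i0 : 'I_d) (e : 'cV[R[i]]_d) : val i0 = 0%N ->
  Dgrp alpha e = Dgroup M e (delta_mx 0 i0).
Proof.
move=> i00; apply/seteqP.
by split=> g [g_SU g_hyp]; split=> // x /(HypE _ i00)/g_hyp/(HypE _ i00).
Qed.

End QalphaForm.

Unset Implicit Arguments.

Theorem mainTheorem7 (R : realType) (d : nat) (alpha : R)
  (hd : (4 <= d)%N) (ha0 : 0 < alpha) (ha1 : alpha < 1 / 2)
  (hint : exists k : int, (d.+1)%:R * alpha = k%:~R)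
  (e : 'cV[R[i]]_d) (he0 : e != 0)
  (hker : forall x : 'cV[R[i]]_d,
      (forall y, Qform alpha x y = 0) <-> exists c : R[i], x = c *: e)
  (G : set 'M[R[i]]_d)
  (hG1 : G 1%:M)
  (hGM : forall g h, G g -> G h -> G (g *m h))
  (hGV : forall g, G g -> G (invmx g))
  (hGsub : G `<=` SUstar alpha e)
  (hDG : Dgrp alpha e `<=` G) :
  G = Dgrp alpha e \/ G = SUstar alpha e.
Proof.
pose i0 : 'I_d := Ordinal (leq_trans (isT : (0 < 4)%N) hd).
have h_e : pairing (delta_mx 0 i0) e != 0.
  apply: contra_neq he0 => /(HypE _ (erefl : val i0 = 0%N)).
  apply: Qmat_ker_hyp_eq0; apply: hform_eq0_mulmx; apply/(hker e).
  by exists 1; rewrite scale1r.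
rewrite (Dgrp_Dgroup _ _ (erefl : val i0 = 0%N)) in hDG *.
have := D_maximal_in_SU (Qmat_herm alpha) hker h_e hd hGM hGV hDG hGsub.
by case=> ->; [left | right].
Qed.
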